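(* Let $n\ge3$, let $p(t)=2(t-1)+3(t-1)^2+\frac23(t-1)^3-\frac16(t-1)^4+\frac1{15}(t-1)^5$, and let $$F(x)=\frac{1}{1-\cos(2\pi/n)}\sum_{i\in\mathbb{Z}_n}(x_i-x_{i+1})^2-\sum_{i=1}^n p(x_i)\in\mathbb{R}[x_1,\dots,x_n].$$ Let $W\subseteq\mathbb{R}[x]_3$ be a linear subspace. Suppose there exist $h\in\mathbb{R}[x]_4$ and a basis $q_1,\dots,q_N$ of $W$ such that $F(x)+(\|x\|^2-n)h(x)=\sum_{j=1}^N q_j(x)^2$ (equivalently, the sum-of-squares representation has a positive definite Gram matrix with respect to a basis of $W$). Then $$W\subseteq W_{\max}:=\{q\in\mathbb{R}[x]_3:\ q(\mathbf{1})=0,\ \phi^\top\nabla q(\mathbf{1})=0,\ \psi^\top\nabla q(\mathbf{1})=0\},$$ where $\mathbf 1=(1,\dots,1)$, $\phi_i=\cos(2\pi i/n)$ and $\psi_i=\sin(2\pi i/n)$ for $i=1,\dots,n$.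
   Context: $\mathbb{R}[x]_k$ denotes real polynomials in $x=(x_1,\dots,x_n)$ of degree at most $k$; $\|x\|^2=\sum_i x_i^2$; indices are taken modulo $n$. *)

From Stdlib Require Import Reals.
From mathcomp Require Import all_boot all_algebra.
From mathcomp Require Import Rstruct.
From mathcomp Require Import mpoly.
Set Implicit Arguments. Unset Strict Implicit. Unset Printing Implicit Defensive.
Import GRing.Theory Num.Theory.
Local Open Scope ring_scope.

(* Polynomials in x_0,...,x_{n-1} (paper: x_1..x_n, coordinate i <-> index i-1). *)
Notation poly_n n := {mpoly R[n]}.

(* degree at most k  (msize p = 1 + total degree, 0 for p = 0) *)
Definition deg_le (n k : nat) (p : poly_n n) : Prop := (msize p <= k.+1)%N.

Definition succI (n : nat) (i : 'I_n) : 'I_n := ordS i.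

Definition pp (n : nat) (t : poly_n n) : poly_n n :=
  let s := t - 1 in
  2%:R *: s + 3%:R *: s ^+ 2 + (2 / 3 : R) *: s ^+ 3
  - (1 / 6 : R) *: s ^+ 4 + (1 / 15 : R) *: s ^+ 5.

Definition Fpoly (n : nat) : poly_n n :=
  (1 / (1 - cos (2 * PI / INR n)) : R) *:
    (\sum_(i < n) ('X_i - 'X_(succI i)) ^+ 2)
  - \sum_(i < n) pp ('X_i : poly_n n).

Definition sphere (n : nat) : poly_n n := \sum_(i < n) ('X_i) ^+ 2 - n%:R.

Definition ones (n : nat) : 'I_n -> R := fun _ => 1.

(* phi_i = cos(2 pi i / n), psi_i = sin(2 pi i / n), i = 1..n (index j = i-1) *)
Definition phi (n : nat) (j : 'I_n) : R := cos (2 * PI * INR j.+1 / INR n).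
Definition psi (n : nat) (j : 'I_n) : R := sin (2 * PI * INR j.+1 / INR n).

Definition Wmax (n : nat) (q : poly_n n) : Prop :=
  [/\ deg_le 3 q,
      q.@[@ones n] = 0,
      \sum_(i < n) phi i * (q^`M(i)).@[@ones n] = 0
    & \sum_(i < n) psi i * (q^`M(i)).@[@ones n] = 0].

From HB Require Import structures.
From Stdlib Require Import Reals.
From mathcomp Require Import all_boot all_order all_algebra Rstruct mpoly ring.
Import Order.TTheory GRing.Theory Num.Theory.
Local Open Scope ring_scope.

(* Restrict the identity F + (|x|^2 - n) h = sum_j q_j^2 to lines x = 1 + t v through the
   point 1 = (1, ..., 1).  For a polynomial P, the restriction t |-> P(1 + t v) has constant
   coefficient P(1) and linear coefficient v . grad P(1) (first-order Taylor expansion).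
   Comparing coefficients of t^0, t^1, t^2:
   - t^0: F(1) = 0 and |1|^2 = n, so sum_j q_j(1)^2 = 0, i.e. every q_j(1) = 0;
   - t^1 along v = 1: the squares now start at t^2, so -2n + 2n h(1) = 0, i.e. h(1) = 1;
   - t^2 along an eigenvector v of the n-cycle for the eigenvalue 2 cos(2π/n): v has mean
     zero and Dirichlet energy 2 (1 - cos(2π/n)) |v|^2, so the left side is
     2|v|^2 - 3|v|^2 + |v|^2 = 0 and sum_j (v . grad q_j(1))^2 = 0.
   The vectors φ and ψ are such eigenvectors, and every element of W is a combination of
   the q_j, hence lies in W_max. *)

Lemma sum_ordS {V : nmodType} {n : nat} (f : 'I_n -> V) :
  \sum_(i < n) f (ordS i) = \sum_(i < n) f i.
Proof. by rewrite [RHS](reindex_inj (@ordS_inj n)). Qed.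

Section CycleEigenvector.
Context {T : numDomainType} {n : nat} {c : T} {v : 'I_n -> T}.
Hypothesis eigen : forall i, v (ordS i) + v (ord_pred i) = 2 * c * v i.

(* Summing the eigen-equation gives 2 \sum v = 2c \sum v. *)
Lemma cycle_eigen_sum : c != 1 -> \sum_(i < n) v i = 0.
Proof.
move=> c_neq1; set S := \sum_(i < n) v i.
have shifted : S + S = 2 * c * S.
  rewrite mulr_sumr -(eq_bigr _ (fun i _ => eigen i)) big_split /= sum_ordS.
  rewrite -(sum_ordS (fun i => v (ord_pred i))) /=.
  by rewrite (eq_bigr v (fun i _ => congr1 v (ordSK i))).
have : 2 * (1 - c) * S = 0 by rewrite -(subrr (S + S)) {2}shifted; ring.
by move/eqP; rewrite !mulf_eq0 pnatr_eq0 subr_eq0 [1 == c]eq_sym (negbTE c_neq1) => /eqP.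
Qed.

Lemma cycle_eigen_energy :
  \sum_(i < n) (v i - v (ordS i)) ^+ 2 = 2 * (1 - c) * \sum_(i < n) v i ^+ 2.
Proof.
set P := \sum_(i < n) v i * v (ordS i).
have P_pred : P = \sum_(i < n) v i * v (ord_pred i).
  by rewrite -sum_ordS; apply: eq_bigr => i _; rewrite ordSK mulrC.
have cross : P + P = 2 * c * \sum_(i < n) v i ^+ 2.
  rewrite {2}P_pred -big_split mulr_sumr /=; apply: eq_bigr => i _.
  by rewrite -mulrDr eigen; ring.
have square : forall i, (v i - v (ordS i)) ^+ 2 = v i ^+ 2 + v (ordS i) ^+ 2
    - (v i * v (ordS i) + v i * v (ordS i)) by move=> i; ring.
rewrite (eq_bigr _ (fun i _ => square i)) sumrB big_split /=.
by rewrite (sum_ordS (fun i => v i ^+ 2)) big_split /= -/P cross; ring.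
Qed.
End CycleEigenvector.

Definition two_pi_periodic (g : R -> R) : Prop :=
  forall x m, g (x + m%:R * (2 * PI)) = g x.

Definition cos_recurrent (g : R -> R) : Prop :=
  forall x a, g (x + a) + g (x - a) = 2 * cos a * g x.

Lemma cos_two_pi_periodic : two_pi_periodic cos.
Proof. by move=> x m; rewrite -[RHS](cos_period x m) !RealsE /=; congr cos; ring. Qed.

Lemma sin_two_pi_periodic : two_pi_periodic sin.
Proof. by move=> x m; rewrite -[RHS](sin_period x m) !RealsE /=; congr sin; ring. Qed.

Lemma cos_cos_recurrent : cos_recurrent cos.
Proof. by move=> x a; rewrite cos_plus cos_minus !RealsE /=; ring. Qed.

Lemma sin_cos_recurrent : cos_recurrent sin.
Proof. by move=> x a; rewrite sin_plus sin_minus !RealsE /=; ring. Qed.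

Section Waves.
Variables (g : R -> R) (n : nat).
Hypotheses (g_periodic : two_pi_periodic g) (n_gt0 : (0 < n)%N).

Definition wave (k : nat) : R := g (2 * PI * INR k / INR n).

Lemma natr_n_neq0 : n%:R != 0 :> R.
Proof. by rewrite pnatr_eq0 -lt0n. Qed.

Lemma wave_mod (k1 k2 : nat) : (k1 = k2 %[mod n])%N -> wave k1 = wave k2.
Proof.
suff wave_modn k : wave (k %% n)%N = wave k by move=> Ek; rewrite -wave_modn Ek wave_modn.
rewrite {2}(divn_eq k n) /wave -(g_periodic _ (k %/ n)%N); congr g.
rewrite !RealsE natrD natrM /=.
move: (k %% n)%N (k %/ n)%N => r d; field; exact: natr_n_neq0.
Qed.

Lemma modn_succ_mod (m : nat) : ((m %% n).+1 = m.+1 %[mod n])%N.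
Proof. by rewrite -[(m %% n).+1]addn1 -[m.+1]addn1 modnDml. Qed.

Lemma wave_cycle_eigen : cos_recurrent g ->
  forall i : 'I_n, wave (ordS i).+1 + wave (ord_pred i).+1 =
    2 * cos (2 * PI / INR n) * wave i.+1.
Proof.
move=> g_rec i.
have -> : wave (ordS i).+1 = wave i.+2 by apply: wave_mod; rewrite modn_succ_mod.
have -> : wave (ord_pred i).+1 = wave i.
  apply: wave_mod; rewrite modn_succ_mod prednK ?modnDr //.
  by rewrite addn_gt0 n_gt0 orbT.
rewrite /wave -g_rec; congr (g _ + g _); rewrite !RealsE; move: (nat_of_ord i) => k.
all: by rewrite -!natr1; field; exact: natr_n_neq0.
Qed.
End Waves.

(* For n >= 2 the angle 2π/n lies in (0, π], where cos is below cos 0 = 1. *)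
Lemma cos_two_pi_div_neq1 {n : nat} : (1 < n)%N -> cos (2 * PI / INR n) != 1.
Proof.
move=> n_gt1; have n_pos : 0 < n%:R :> R by rewrite ltr0n; apply: ltnW.
have pi_pos : 0 < PI by apply/RltP; exact: PI_RGT_0.
have angle_pos : 0 < 2 * PI / n%:R :> R by rewrite divr_gt0 // mulr_gt0.
have angle_le_pi : 2 * PI / n%:R <= PI :> R.
  by rewrite ler_pdivrMr // mulrC ler_pM2l // ler_nat.
suff : cos (2 * PI / INR n) < 1 by move/lt_eqF ->.
rewrite -[X in _ < X]cos_0; apply/RltP.
apply: cos_decreasing_1; rewrite ?RealsE /=.
- exact: Rle_refl.
- by apply/RleP; rewrite ltW.
- by apply/RleP; rewrite ltW.
- exact/RleP.
- exact/RltP.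
Qed.

Lemma sum_sqr_eq0 {T : realDomainType} {N : nat} (f : 'I_N -> T) :
  \sum_(j < N) f j ^+ 2 = 0 -> forall j, f j = 0.
Proof.
move=> sum0 j; apply/eqP; rewrite -sqrf_eq0; apply/eqP.
by apply: (psumr_eq0P (P := xpredT) (F := fun j => f j ^+ 2)) => // i _; exact: sqr_ge0.
Qed.

Section LowOrderCoefficients.
Context {T : comNzRingType}.

Lemma coefM_low (p r : {poly T}) :
  [/\ (p * r)`_0 = p`_0 * r`_0, (p * r)`_1 = p`_0 * r`_1 + p`_1 * r`_0
    & (p * r)`_2 = p`_0 * r`_2 + p`_1 * r`_1 + p`_2 * r`_0].
Proof. by rewrite !coefM !big_ord_recr !big_ord0 /= !subSS !subn0 !add0r. Qed.

Lemma coef01_prod (I : Type) (s : seq I) (F : I -> {poly T}) :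
  (forall i, (F i)`_0 = 1) ->
  (\prod_(i <- s) F i)`_0 = 1 /\ (\prod_(i <- s) F i)`_1 = \sum_(i <- s) (F i)`_1.
Proof.
move=> F0; elim: s => [|x s [IH0 IH1]]; first by rewrite !big_nil !coef1; split.
have [M0 M1 _] := coefM_low (F x) (\prod_(i <- s) F i).
by rewrite !big_cons M0 M1 IH0 IH1 F0; split; ring.
Qed.

Lemma coef01_exp (p : {poly T}) (k : nat) :
  p`_0 = 1 -> (p ^+ k)`_0 = 1 /\ (p ^+ k)`_1 = k%:R * p`_1.
Proof.
move=> p0; rewrite -(subn0 k) -prodr_const_nat.
have [-> ->] := @coef01_prod _ (index_iota 0 k) (fun=> p) (fun=> p0).
by rewrite sumr_const_nat mulr_natl.
Qed.

Lemma coef_sqr_low (p : {poly T}) : p`_0 = 0 -> (p ^+ 2)`_1 = 0 /\ (p ^+ 2)`_2 = p`_1 ^+ 2.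
Proof. by move=> p0; have [_ M1 M2] := coefM_low p p; rewrite expr2 M1 M2 p0; split; ring. Qed.

Lemma coef_line (c : T) :
  [/\ (1 + c *: 'X : {poly T})`_0 = 1, (1 + c *: 'X : {poly T})`_1 = c
    & (1 + c *: 'X : {poly T})`_2 = 0].
Proof. by rewrite !coefD !coefZ !coef1 !coefX /= !mulr0 !mulr1 !addr0 add0r. Qed.

Lemma coef_scaleX_exp (c : T) (k j : nat) : ((c *: 'X) ^+ k)`_j = c ^+ k * (j == k)%:R.
Proof. by rewrite exprZn coefZ coefXn. Qed.
End LowOrderCoefficients.

Section Lines.
Context {n : nat}.
Variable v : 'I_n -> R.

(* The restriction t |-> P(1 + t v) of P to the line through 1 = (1, ..., 1) in direction v. *)
Definition along (P : {mpoly R[n]}) : {poly R} := mmap (@polyC R) (fun i => 1 + v i *: 'X) P.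

HB.instance Definition _ :=
  GRing.RMorphism.copy along (mmap (@polyC R) (fun i => 1 + v i *: 'X)).

Lemma alongZ (a : R) (P : {mpoly R[n]}) : along (a *: P) = a *: along P.
Proof. by rewrite /along mmapZ mul_polyC. Qed.

Lemma along_X (i : 'I_n) : along 'X_i = 1 + v i *: 'X.
Proof. by rewrite /along mmapX mmap1U. Qed.

Lemma meval_ones_monomial (m : 'X_{1.. n}) : ('X_[m] : {mpoly R[n]}).@[@ones n] = 1.
Proof. by rewrite mevalX big1 // => i _; rewrite expr1n. Qed.

Lemma along_monomial_low (m : 'X_{1.. n}) :
  (along 'X_[m])`_0 = 1 /\ (along 'X_[m])`_1 = \sum_(i < n) v i * (m i)%:R.
Proof.
have line_pow0 i : ((1 + v i *: 'X) ^+ m i)`_0 = 1.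
  by have [line0 _ _] := coef_line (v i); rewrite (coef01_exp _ (m i) line0).1.
rewrite /along mmapX /mmap1; have [-> ->] := @coef01_prod _ _ (index_enum 'I_n) _ line_pow0.
split=> //; apply: eq_bigr => i _.
have [line0 line1 _] := coef_line (v i).
by rewrite (coef01_exp _ (m i) line0).2 line1 mulrC.
Qed.

Lemma along_taylor (P : {mpoly R[n]}) :
  (along P)`_0 = P.@[@ones n] /\
  (along P)`_1 = \sum_(i < n) v i * (P^`M(i)).@[@ones n].
Proof.
elim/mpolyind: P => [|c m p _ _ [IH0 IH1]].
  rewrite rmorph0 !coef0 meval0; split=> //.
  by rewrite big1 // => i _; rewrite mderiv0 meval0 mulr0.
have [X0 X1] := along_monomial_low m.
rewrite rmorphD /= alongZ !coefD !coefZ X0 X1 IH0 IH1 mevalD mevalZ meval_ones_monomial.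
split; first by rewrite mulr1.
rewrite mulr_sumr -big_split; apply: eq_bigr => i _ /=.
rewrite mderivD mderivZ mderivX mevalD !mevalZ meval_ones_monomial; ring.
Qed.

Lemma along_lincomb (N : nat) (c : 'I_N -> R) (q : 'I_N -> {mpoly R[n]}) (k : nat) :
  (along (\sum_(j < N) c j *: q j))`_k = \sum_(j < N) c j * (along (q j))`_k.
Proof. by rewrite rmorph_sum coef_sum; apply: eq_bigr => j _; rewrite /= alongZ coefZ. Qed.
End Lines.

Section AlongF.
Context {n : nat}.
Variable v : 'I_n -> R.

Lemma along_pp (i : 'I_n) :
  [/\ (along v (pp 'X_i))`_0 = 0, (along v (pp 'X_i))`_1 = 2 * v i
    & (along v (pp 'X_i))`_2 = 3 * v i ^+ 2].
Proof.
have shift : along v ('X_i - 1) = v i *: 'X by rewrite rmorphB /= along_X rmorph1 addrC addKr.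
rewrite /pp; move: shift; move: ('X_i - 1) => s shift.
rewrite !(rmorphD, rmorphN) /= !alongZ !rmorphXn /= shift.
rewrite !(coefD, coefN, coefZ, coef_scaleX_exp, coefX) /=.
by split; ring.
Qed.

Lemma along_Fpoly :
  [/\ (along v (Fpoly n))`_0 = 0, (along v (Fpoly n))`_1 = - \sum_(i < n) 2 * v i
    & (along v (Fpoly n))`_2 = (1 / (1 - cos (2 * PI / INR n)) : R) *
        \sum_(i < n) (v i - v (succI i)) ^+ 2 - \sum_(i < n) 3 * v i ^+ 2].
Proof.
have edge i : along v (('X_i - 'X_(succI i)) ^+ 2) = ((v i - v (succI i)) *: 'X) ^+ 2.
  by rewrite rmorphXn rmorphB /= !along_X opprD addrACA subrr add0r scalerBl.
rewrite /Fpoly rmorphB /= alongZ !rmorph_sum /= (eq_bigr _ (fun i _ => edge i)).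
rewrite !coefB !coefZ !coef_sum.
split.
- rewrite big1 ?mulr0 => [|i _]; last by rewrite coef_scaleX_exp mulr0.
  by rewrite big1 ?subrr // => i _; have [-> _ _] := along_pp i.
- rewrite big1 ?mulr0 ?sub0r => [|i _]; last by rewrite coef_scaleX_exp mulr0.
  by congr (- _); apply: eq_bigr => i _; have [_ -> _] := along_pp i.
- congr (_ * _ - _); apply: eq_bigr => i _; first by rewrite coef_scaleX_exp mulr1.
  by have [_ _ ->] := along_pp i.
Qed.

Lemma along_sphere :
  [/\ (along v (sphere n))`_0 = 0, (along v (sphere n))`_1 = \sum_(i < n) 2 * v i
    & (along v (sphere n))`_2 = \sum_(i < n) v i ^+ 2].
Proof.
have square i : along v ('X_i ^+ 2) = (1 + v i *: 'X) * (1 + v i *: 'X).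
  by rewrite rmorphXn /= along_X expr2.
rewrite /sphere rmorphB /= rmorph_sum rmorph_nat (eq_bigr _ (fun i _ => square i)).
rewrite !coefB !coef_sum !coefMn !coef1 /= ?mul0rn ?subr0.
have low i := coefM_low (1 + v i *: 'X) (1 + v i *: 'X).
split.
- rewrite (eq_bigr (fun=> 1)) ?sumr_const ?card_ord ?subrr // => i _.
  by have [-> _ _] := low i; have [-> _ _] := coef_line (v i); rewrite mulr1.
- by apply: eq_bigr => i _; have [_ -> _] := low i; have [-> -> _] := coef_line (v i); ring.
- by apply: eq_bigr => i _; have [_ _ ->] := low i; have [-> -> ->] := coef_line (v i); ring.
Qed.
End AlongF.

Section SumOfSquaresOnLines.
Context {n N : nat} {q : 'I_N -> {mpoly R[n]}} {h : {mpoly R[n]}}.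
Hypothesis n_gt1 : (1 < n)%N.
Hypothesis sos : Fpoly n + sphere n * h = \sum_(j < N) q j ^+ 2.

Lemma sos_along (v : 'I_n -> R) :
  along v (Fpoly n) + along v (sphere n) * along v h = \sum_(j < N) along v (q j) ^+ 2.
Proof. by rewrite -rmorphM -rmorphD /= sos rmorph_sum; apply: eq_bigr => j _; rewrite rmorphXn. Qed.

(* Constant coefficients: F(1) = 0 and |1|^2 = n, so sum_j q_j(1)^2 = 0. *)
Lemma sos_value_one (j : 'I_N) : (q j).@[@ones n] = 0.
Proof.
move: j; apply: sum_sqr_eq0.
have := congr1 (fun p : {poly R} => p`_0) (sos_along (@ones n)).
have [F0 _ _] := along_Fpoly (@ones n); have [S0 _ _] := along_sphere (@ones n).
rewrite /= coefD coef0M F0 S0 mul0r add0r coef_sum => /esym sum0.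
rewrite -{}[RHS]sum0; apply: eq_bigr => j _.
by rewrite !expr2 coef0M (along_taylor _ _).1.
Qed.

(* Restricted to any line, each q_j vanishes at t = 0, so q_j^2 = O(t^2). *)
Lemma sos_square_low (v : 'I_n -> R) (j : 'I_N) :
  (along v (q j) ^+ 2)`_1 = 0 /\ (along v (q j) ^+ 2)`_2 = (along v (q j))`_1 ^+ 2.
Proof. by apply: coef_sqr_low; rewrite (along_taylor _ _).1 sos_value_one. Qed.

(* Linear coefficients along the diagonal: -2n + 2n h(1) = 0. *)
Lemma sos_h_one : h.@[@ones n] = 1.
Proof.
have := congr1 (fun p : {poly R} => p`_1) (sos_along (@ones n)).
have [_ F1 _] := along_Fpoly (@ones n); have [S0 S1 _] := along_sphere (@ones n).
have [_ M1 _] := coefM_low (along (@ones n) (sphere n)) (along (@ones n) h).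
rewrite /= coef_sum big1 => [|j _]; last exact: (sos_square_low _ j).1.
rewrite coefD M1 F1 S0 S1 (along_taylor _ h).1 mul0r add0r /ones sumr_const card_ord => diag.
have : 2 *+ n * (h.@[@ones n] - 1) = 0 by rewrite -[RHS]diag; ring.
move/eqP; rewrite mulf_eq0 mulrn_eq0 pnatr_eq0 subr_eq0 (gtn_eqF (ltnW n_gt1)) /=.
by move/eqP.
Qed.

(* Quadratic coefficients along an eigenvector v of the n-cycle for the eigenvalue
   2 cos(2π/n): v has mean zero, K (1 - cos(2π/n)) = 1 and h(1) = 1, so the left side is
   2|v|^2 - 3|v|^2 + |v|^2 = 0 and the gradients of all q_j at 1 are orthogonal to v. *)
Lemma sos_directional (v : 'I_n -> R) :
  (forall i, v (ordS i) + v (ord_pred i) = 2 * cos (2 * PI / INR n) * v i) ->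
  forall j, (along v (q j))`_1 = 0.
Proof.
move=> eigen; apply: sum_sqr_eq0.
have c_neq1 := cos_two_pi_div_neq1 n_gt1.
have := congr1 (fun p : {poly R} => p`_2) (sos_along v).
have [_ _ F2] := along_Fpoly v; have [S0 S1 S2] := along_sphere v.
have [_ _ M2] := coefM_low (along v (sphere n)) (along v h).
rewrite /= coef_sum (eq_bigr _ (fun j _ => (sos_square_low v j).2)) => <-.
rewrite coefD M2 F2 S0 S1 S2 (along_taylor _ h).1 sos_h_one.
rewrite /succI (cycle_eigen_energy eigen) -!mulr_sumr (cycle_eigen_sum eigen c_neq1).
move: c_neq1; rewrite !RealsE /= => c_neq1.
by field; rewrite subr_eq0 eq_sym.
Qed.
End SumOfSquaresOnLines.

(* Every element of W is a combination of the q_j, hence satisfies the linear conditions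
   q(1) = 0, φ . grad q(1) = 0 and ψ . grad q(1) = 0 shown for each q_j. *)
Theorem mainTheorem7 (n : nat) (hn : (3 <= n)%N)
  (W : poly_n n -> Prop)
  (W0 : W 0)
  (WD : forall u v, W u -> W v -> W (u + v))
  (WZ : forall (a : R) u, W u -> W (a *: u))
  (Wdeg : forall u, W u -> deg_le 3 u)
  (N : nat) (q : 'I_N -> poly_n n)
  (qW : forall j, W (q j))
  (qfree : forall c : 'I_N -> R, \sum_(j < N) c j *: q j = 0 -> forall j, c j = 0)
  (qspan : forall u, W u -> exists c : 'I_N -> R, u = \sum_(j < N) c j *: q j)
  (h : poly_n n) (hdeg : deg_le 4 h)
  (hsos : Fpoly n + sphere n * h = \sum_(j < N) q j ^+ 2) :
  forall u, W u -> Wmax u.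
Proof.
have n_gt1 : (1 < n)%N by apply: leq_trans hn.
have n_gt0 : (0 < n)%N := ltnW n_gt1.
have grad_phi := sos_directional n_gt1 hsos (@phi n)
  (wave_cycle_eigen _ _ cos_two_pi_periodic n_gt0 cos_cos_recurrent).
have grad_psi := sos_directional n_gt1 hsos (@psi n)
  (wave_cycle_eigen _ _ sin_two_pi_periodic n_gt0 sin_cos_recurrent).
move=> u Wu; have [c u_span] := qspan u Wu.
have coef_u v k : (along v u)`_k = \sum_(j < N) c j * (along v (q j))`_k.
  by rewrite u_span along_lincomb.
split; first exact: Wdeg.
- rewrite -(along_taylor (@ones n) u).1 coef_u big1 // => j _.
  by rewrite (along_taylor _ _).1 (sos_value_one hsos) mulr0.
- by rewrite -(along_taylor (@phi n) u).2 coef_u big1 // => j _; rewrite grad_phi mulr0.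
- by rewrite -(along_taylor (@psi n) u).2 coef_u big1 // => j _; rewrite grad_psi mulr0.
Qed.
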